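(* With $w_1=\alpha A+bC$, $u=\alpha B+bD$, $w_2=\delta D+cB$, $v=cA+\delta C$ (the entries of $\Omega=\mathsf dT\,T^{-1}$, where $T^{-1}=\begin{pmatrix}A&B\\C&D\end{pmatrix}$), the following hold in $\Gamma$: $w_1u=uw_1-2hu^2$, $w_2u=uw_2$, $w_1v=vw_1+2h(w_1w_2-uv)$, $w_2v=vw_2$, $w_1w_2=-w_2w_1-2huw_2$, $w_1^2=-2huw_1$, $w_2^2=0$, $uv=vu-2huw_2$. Moreover $\mathcal D_h=ad^{-1}-\beta d^{-1}\gamma d^{-1}$ and $\hat{\mathcal D}=bc^{-1}-\alpha c^{-1}\delta c^{-1}$ commute with $w_1,w_2,u,v$.
   Context: Let $h$ be an odd (Grassmann) parameter with $h^2=0$; even elements commute with everything and odd elements anticommute with each other. $\mathcal A$ is the $\mathbb Z_2$-graded algebra generated by even invertible $a,d$ and odd $\beta,\gamma$ ($h$ commuting with $a,d$, anticommuting with $\beta,\gamma$) subject to $a\beta=\beta a$, $a\gamma=\gamma a+h a^2(1-\mathcal D_h^{-1})$, $d\beta=\beta d$, $d\gamma=\gamma d+h d^2(\mathcal D_h-1)$, $\beta^2=0$, $\gamma^2=h\gamma d(1-\mathcal D_h)$, $\beta\gamma=-\gamma\beta+h\beta d(1-\mathcal D_h)$, $ad=da+h\beta d(\mathcal D_h-1)$, with $\mathcal D_h=ad^{-1}-\beta d^{-1}\gamma d^{-1}$; $T=\begin{pmatrix}a&\beta\\ \gamma&d\end{pmatrix}$ and $T^{-1}=\begin{pmatrix}a^{-1}+a^{-1}\beta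 d^{-1}\gamma a^{-1}&-a^{-1}\beta d^{-1}\\ -d^{-1}\gamma a^{-1}& d^{-1}+d^{-1}\gamma a^{-1}\beta d^{-1}\end{pmatrix}$. The differential algebra $\Gamma$ is the $\mathbb Z_2$-graded algebra generated by $\mathcal A$ together with odd elements $\alpha=\mathsf da,\ \delta=\mathsf dd$ and even elements $b=\mathsf d\beta,\ c=\mathsf d\gamma$ ($c$ invertible; $h$ anticommutes with $\alpha,\delta$), where $\mathsf d$ is an odd map with $\mathsf d^2=0$, graded Leibniz rule and $\mathsf dh=-h\mathsf d$, subject to the relations $a\alpha=\alpha a+h(\alpha\beta-ba)$, $ab=ba-hb\beta$, $ac=ca+h(\alpha a-c\beta+\delta a)$, $a\delta=\delta a+h(ba+\delta\beta)$; $\beta\alpha=-\alpha\beta+hb\beta$, $\beta b=b\beta$, $\beta c=c\beta+h(\alpha+\delta)\beta$, $\beta\delta=-\delta\beta-hb\beta$; $\gamma\alpha=-\alpha\gamma+h(\alpha a+\alpha d+b\gamma)$, $\gamma b=b\gamma+hb(a+d)$, $\gamma c=c\gamma+h(\alpha\gamma+ca+cd+\delta\gamma)$, $\gamma\delta=-\delta\gamma+h(\delta a+\delta d-b\gamma)$; $d\alpha=\alpha d-h(\alpha\beta+bd)$, $db=bd+hb\beta$, $dc=cd+h(\alpha d+c\beta+\delta d)$, $d\delta=\delta d+h(bd-\delta\beta)$; and $\alpha b=b\alpha+hb^2$, $\alpha c=c\alpha+h(cb+\delta\alpha)$, $\delta b=b\delta-hb^2$, $\delta c=c\delta-h(cb-\alpha\delta)$,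 $\alpha^2=h\alpha b$, $\alpha\delta=-\delta\alpha+h(\delta-\alpha)b$, $\delta^2=-h\delta b$, $bc=cb+h(\delta+\alpha)b$. *)

(* Gamma is presented by generators and relations, so an identity
   holds in Gamma iff it holds for every family of elements satisfying the
   defining relations in an arbitrary (unital, associative) K-algebra. *)
From mathcomp Require Import all_boot all_order all_algebra.
Set Implicit Arguments. Unset Strict Implicit. Unset Printing Implicit Defensive.
Import GRing.Theory.
Local Open Scope ring_scope.

Section Gam.
Variables (K : fieldType) (R : unitAlgType K).

Definition Dh (a d be ga : R) : R := a * d^-1 - be * d^-1 * ga * d^-1.
Definition Dhat (al de b c : R) : R := b * c^-1 - al * c^-1 * de * c^-1.

Definition TiA (a d be ga : R) : R := a^-1 + a^-1 * be * d^-1 * ga * a^-1.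
Definition TiB (a d be ga : R) : R := - (a^-1 * be * d^-1).
Definition TiC (a d be ga : R) : R := - (d^-1 * ga * a^-1).
Definition TiD (a d be ga : R) : R := d^-1 + d^-1 * ga * a^-1 * be * d^-1.

Definition w1 (a d be ga al de b c : R) : R :=
  al * TiA a d be ga + b * TiC a d be ga.
Definition uu (a d be ga al de b c : R) : R :=
  al * TiB a d be ga + b * TiD a d be ga.
Definition w2 (a d be ga al de b c : R) : R :=
  de * TiD a d be ga + c * TiB a d be ga.
Definition vv (a d be ga al de b c : R) : R :=
  c * TiA a d be ga + de * TiC a d be ga.

(* The defining relations of Gamma (including those of the algebra A and of
   the Grassmann parameter h), for elements
   h (odd), a d (even, invertible), be ga (odd) = beta gamma,
   al de (odd) = alpha = da, delta = dd, b c (even, c invertible) = d beta, d gamma. *)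
Definition Gamma_rels (h a d be ga al de b c : R) : Prop :=
  let D := Dh a d be ga in
  (
   ( h * h = 0 /\ h * a = a * h /\ h * d = d * h /\ h * be = - (be * h) /\
       h * ga = - (ga * h) /\ h * al = - (al * h) /\ h * de = - (de * h) /\
       h * b = b * h /\ h * c = c * h) /\
   ( a \is a GRing.unit /\ d \is a GRing.unit /\ c \is a GRing.unit /\ D \is a GRing.unit) /\
   ( a * be = be * a /\
       a * ga = ga * a + h * (a * a) * (1 - D^-1) /\
       d * be = be * d /\
       d * ga = ga * d + h * (d * d) * (D - 1) /\
       be * be = 0 /\
       ga * ga = h * ga * d * (1 - D) /\
       be * ga = - (ga * be) + h * be * d * (1 - D) /\
       a * d = d * a + h * be * d * (D - 1)) /\
   ( ( a * al = al * a + h * (al * be - b * a) /\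
           a * b = b * a - h * b * be /\
           a * c = c * a + h * (al * a - c * be + de * a) /\
           a * de = de * a + h * (b * a + de * be)) /\
       ( be * al = - (al * be) + h * b * be /\
           be * b = b * be /\
           be * c = c * be + h * (al + de) * be /\
           be * de = - (de * be) - h * b * be) /\
       ( ga * al = - (al * ga) + h * (al * a + al * d + b * ga) /\
           ga * b = b * ga + h * b * (a + d) /\
           ga * c = c * ga + h * (al * ga + c * a + c * d + de * ga) /\
           ga * de = - (de * ga) + h * (de * a + de * d - b * ga)) /\
       ( d * al = al * d - h * (al * be + b * d) /\
           d * b = b * d + h * b * be /\
           d * c = c * d + h * (al * d + c * be + de * d) /\
           d * de = de * d + h * (b * d - de * be))) /\
   ( al * b = b * al + h * (b * b) /\
       al * c = c * al + h * (c * b + de * al) /\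
       de * b = b * de - h * (b * b) /\
       de * c = c * de - h * (c * b - al * de) /\
       al * al = h * al * b /\
       al * de = - (de * al) + h * (de - al) * b /\
       de * de = - (h * de * b) /\
       b * c = c * b + h * (de + al) * b)).

End Gam.

From mathcomp Require Import all_boot all_order all_algebra.
Import GRing.Theory.
Local Open Scope ring_scope.

(* Every relation of Gamma lets one swap two adjacent generators, up to a sign
   and a correction term that is a multiple of h; conjugating by a^-1, d^-1,
   c^-1 gives the same for the inverses.  Since h * h = 0 and h supercommutes
   with all generators, orienting these swaps along a fixed order of the
   generators yields a terminating rewriting system on noncommutative
   polynomials, and each identity of the theorem is checked by normalizing the
   difference of its two sides to 0.  The relation for a gamma involves
   D_h^-1; it is first used with D_h^-1 as an opaque atom, which is enough to
   show h D_h^-1 = h (d a^-1 + beta gamma a^-2), after which D_h^-1 is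
   eliminated from the rules. *)

(** * Noncommutative polynomials with integer coefficients *)

Definition monom := seq nat.
Definition ncpoly := seq (int * monom).

Definition ncpoly_monom (m : monom) : ncpoly := [:: (1, m)].
Definition ncpoly_scale (z : int) (p : ncpoly) : ncpoly := [seq (z * t.1, t.2) | t <- p].
Definition ncpoly_sub (p q : ncpoly) : ncpoly := p ++ ncpoly_scale (-1) q.
Definition ncpoly_mul (p q : ncpoly) : ncpoly :=
  [seq (t.1 * s.1, t.2 ++ s.2) | t <- p, s <- q].

Fixpoint add_term (t : int * monom) (p : ncpoly) : ncpoly :=
  if p is s :: p' then
    if s.2 == t.2 then (s.1 + t.1, s.2) :: p' else s :: add_term t p'
  else [:: t].

Definition collect (p : ncpoly) : ncpoly := [seq t <- foldr add_term [::] p | t.1 != 0].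

Inductive ncexpr :=
  | NCAtom of nat
  | NCConst of int
  | NCAdd of ncexpr & ncexpr
  | NCMul of ncexpr & ncexpr
  | NCOpp of ncexpr.

Fixpoint ncexpr_poly (e : ncexpr) : ncpoly :=
  match e with
  | NCAtom i => ncpoly_monom [:: i]
  | NCConst z => [:: (z, [::])]
  | NCAdd e1 e2 => ncexpr_poly e1 ++ ncexpr_poly e2
  | NCMul e1 e2 => ncpoly_mul (ncexpr_poly e1) (ncexpr_poly e2)
  | NCOpp e1 => ncpoly_scale (-1) (ncexpr_poly e1)
  end.

Section Evaluation.
Context {R : pzRingType} (env : seq R).

Definition atom (i : nat) : R := nth 0 env i.

Fixpoint eval_monom (m : monom) : R :=
  if m is i :: m' then atom i * eval_monom m' else 1.

Fixpoint eval_poly (p : ncpoly) : R :=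
  if p is t :: p' then t.1%:~R * eval_monom t.2 + eval_poly p' else 0.

Fixpoint eval_ncexpr (e : ncexpr) : R :=
  match e with
  | NCAtom i => atom i
  | NCConst z => z%:~R
  | NCAdd e1 e2 => eval_ncexpr e1 + eval_ncexpr e2
  | NCMul e1 e2 => eval_ncexpr e1 * eval_ncexpr e2
  | NCOpp e1 => - eval_ncexpr e1
  end.

Lemma eval_monom_cat u v : eval_monom (u ++ v) = eval_monom u * eval_monom v.
Proof. by elim: u => [|i u IH] /=; rewrite ?mul1r // IH mulrA. Qed.

Lemma eval_poly_monom m : eval_poly (ncpoly_monom m) = eval_monom m.
Proof. by rewrite /= addr0 mul1r. Qed.

Lemma eval_poly_cat p q : eval_poly (p ++ q) = eval_poly p + eval_poly q.
Proof. by elim: p => [|t p IH] /=; rewrite ?add0r // IH addrA. Qed.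

Lemma eval_poly_scale z p : eval_poly (ncpoly_scale z p) = z%:~R * eval_poly p.
Proof. by elim: p => [|t p IH] /=; rewrite ?mulr0 // IH mulrDr intrM mulrA. Qed.

Lemma eval_poly_sub p q : eval_poly (ncpoly_sub p q) = eval_poly p - eval_poly q.
Proof. by rewrite eval_poly_cat eval_poly_scale mulN1r. Qed.

Lemma eval_poly_mul p q : eval_poly (ncpoly_mul p q) = eval_poly p * eval_poly q.
Proof.
elim: p => [|t p IH] /=; first by rewrite mul0r.
rewrite eval_poly_cat IH mulrDl; congr (_ + _); elim: q {IH} => [|s q IHq] /=.
  by rewrite mulr0.
rewrite IHq mulrDr intrM eval_monom_cat -!mulrA; congr (_ + _); congr (_ * _).
by rewrite !mulrA commr_int.
Qed.

Lemma eval_poly_add_term t p : eval_poly (add_term t p) = eval_poly (t :: p).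
Proof.
elim: p => [|s p IH] //=; case: eqP => [->|_] /=.
  by rewrite intrD mulrDl addrA (addrC (s.1%:~R * _)).
by rewrite IH /= !addrA (addrC (s.1%:~R * _)).
Qed.

Lemma eval_poly_collect p : eval_poly (collect p) = eval_poly p.
Proof.
have -> : eval_poly p = eval_poly (foldr add_term [::] p).
  by elim: p => [|t p IH] //=; rewrite eval_poly_add_term /= IH.
rewrite /collect; elim: (foldr add_term [::] p) => [|t q IH] //=.
by case: eqP => [->|_] /=; rewrite IH // mul0r add0r.
Qed.

Lemma eval_ncexpr_poly e : eval_poly (ncexpr_poly e) = eval_ncexpr e.
Proof.
elim: e => [i|z|e1 IH1 e2 IH2|e1 IH1 e2 IH2|e1 IH1] /=.
- by rewrite addr0 mul1r mulr1.
- by rewrite addr0 mulr1.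
- by rewrite eval_poly_cat IH1 IH2.
- by rewrite eval_poly_mul IH1 IH2.
- by rewrite eval_poly_scale IH1 mulN1r.
Qed.

Lemma ncexpr_eq_collect e1 e2 :
  collect (ncpoly_sub (ncexpr_poly e1) (ncexpr_poly e2)) = [::] ->
  eval_ncexpr e1 = eval_ncexpr e2.
Proof.
move=> pq0; rewrite -!eval_ncexpr_poly; apply/eqP.
by rewrite -subr_eq0 -eval_poly_sub -eval_poly_collect pq0.
Qed.

End Evaluation.

Arguments atom : simpl never.

(** * Normalization modulo an odd nilpotent parameter *)

(* (i, j, q) stands for the relation atom i * atom j = q. *)
Definition rule := (nat * nat * ncpoly)%type.

Fixpoint lookup_rule (rs : seq rule) (i j : nat) : option ncpoly :=
  if rs is (i', j', q) :: rs' then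
    if (i' == i) && (j' == j) then Some q else lookup_rule rs' i j
  else None.

Section Normalize.
Variables (rules : seq rule) (parity : pred nat).

Definition rewrite_head (i : nat) (m : monom) : option ncpoly :=
  if m is j :: m' then omap (ncpoly_mul^~ (ncpoly_monom m')) (lookup_rule rules i j)
  else None.

Fixpoint rewrite_pair (m : monom) : option ncpoly :=
  if m is i :: m' then
    if rewrite_head i m' is Some q then Some q
    else omap (ncpoly_mul (ncpoly_monom [:: i])) (rewrite_pair m')
  else None.

(* Atom 0 is the odd parameter h with h * h = 0: a monomial containing it twice
   vanishes, and it is moved to the front of the monomial. *)
Definition mul_h (q : ncpoly) : ncpoly := [seq (t.1, 0%N :: t.2) | t <- q & 0%N \notin t.2].

Definition reduce_monom (m : monom) : option ncpoly :=
  let k := index 0%N m in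
  if (1 < count_mem 0%N m)%N then Some [::]
  else if (0 < k < size m)%N then
    Some [:: ((-1) ^+ count parity (take k m), 0%N :: take k m ++ drop k.+1 m)]
  else if m is 0%N :: m' then omap mul_h (rewrite_pair m')
  else rewrite_pair m.

Definition reduce_step (p : ncpoly) : ncpoly :=
  collect (flatten [seq if reduce_monom t.2 is Some q then ncpoly_scale t.1 q else [:: t]
                   | t <- p]).

Definition normalize (n : nat) : ncpoly -> ncpoly := iter n reduce_step.

End Normalize.

Section NormalizeSound.
Context {R : pzRingType} (env : seq R) (rules : seq rule) (parity : pred nat).

Local Notation atom := (atom env).
Local Notation eval_monom := (eval_monom env).
Local Notation eval_poly := (eval_poly env).

Definition rule_holds (r : rule) : Prop :=
  let: (i, j, q) := r in atom i * atom j = eval_poly q.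

Hypothesis rules_hold : {in rules, forall r, rule_holds r}.
Hypothesis h_nilpotent : atom 0%N * atom 0%N = 0.
Hypothesis h_supercomm : forall i, atom i * atom 0%N = (-1) ^+ parity i * (atom 0%N * atom i).

Lemma lookup_rule_sound {i j q} :
  lookup_rule rules i j = Some q -> atom i * atom j = eval_poly q.
Proof.
elim: rules rules_hold => [|[[i' j'] q'] rs IH] //= rs_hold.
case: andP => [[/eqP <- /eqP <-] [<-]|_]; first exact: (rs_hold (i', j', q') (mem_head _ _)).
by apply: IH => r r_rs; apply: rs_hold; rewrite inE r_rs orbT.
Qed.

Lemma eval_rewrite_head {i m q} :
  rewrite_head rules i m = Some q -> eval_poly q = atom i * eval_monom m.
Proof.
case: m => [|j m] //=; case E: lookup_rule => [r|] //= [<-].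
by rewrite eval_poly_mul eval_poly_monom -(lookup_rule_sound E) mulrA.
Qed.

Lemma eval_rewrite_pair {m q} : rewrite_pair rules m = Some q -> eval_poly q = eval_monom m.
Proof.
elim: m q => [|i m IH] q //=; case E: rewrite_head => [r|].
  by case=> <-; rewrite (eval_rewrite_head E).
case E': rewrite_pair => [q'|] //= [<-].
by rewrite eval_poly_mul eval_poly_monom (IH _ E') /= mulr1.
Qed.

Lemma eval_monom_move_h u v :
  eval_monom (u ++ 0%N :: v) = (-1) ^+ count parity u * eval_monom (0%N :: u ++ v).
Proof.
elim: u => [|i u IH] /=; first by rewrite mul1r.
rewrite IH /= exprD [LHS]mulrA (commr_sign (atom i) (count parity u)) -mulrA.
rewrite (mulrA (atom i)) h_supercomm.
by rewrite !mulrA -exprD addnC exprD.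
Qed.

Lemma split_at_h {m : monom} :
  0%N \in m -> m = take (index 0%N m) m ++ 0%N :: drop (index 0%N m).+1 m.
Proof.
by move=> m0; rewrite -[LHS](cat_take_drop (index 0%N m)) (drop_nth 0%N) ?index_mem ?nth_index.
Qed.

Lemma eval_monom_pull_h {m} : 0%N \in m ->
  eval_monom m = (-1) ^+ count parity (take (index 0%N m) m) *
                 eval_monom (0%N :: take (index 0%N m) m ++ drop (index 0%N m).+1 m).
Proof. by move/split_at_h=> {1}->; rewrite eval_monom_move_h. Qed.

Lemma eval_monom_h_twice m : (1 < count_mem 0%N m)%N -> eval_monom m = 0.
Proof.
move=> hh; have m0 : 0%N \in m by rewrite -has_pred1 has_count (ltn_trans _ hh).
have m'0 : 0%N \in take (index 0%N m) m ++ drop (index 0%N m).+1 m.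
  move: hh; rewrite {1}(split_at_h m0) count_cat /= addnCA add1n ltnS.
  by rewrite -count_cat -has_count has_pred1.
rewrite (eval_monom_pull_h m0) /= (eval_monom_pull_h m'0) /=.
rewrite (mulrA (atom 0%N)) (commr_sign (atom 0%N)) -mulrA (mulrA (atom 0%N)).
by rewrite h_nilpotent mul0r !mulr0.
Qed.

Lemma eval_mul_h q : eval_poly (mul_h q) = atom 0%N * eval_poly q.
Proof.
elim: q => [|t q IH]; first by rewrite /= mulr0.
rewrite /mul_h /= -/(mul_h q) mulrDr -IH mulrA (commr_int (atom 0%N)) -mulrA.
case: ifP => [_|/negbFE t0] //=.
have -> : atom 0%N * eval_monom t.2 = 0.
  by apply: (eval_monom_h_twice (0%N :: t.2)); rewrite /= add1n ltnS -has_count has_pred1.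
by rewrite mulr0 add0r.
Qed.

Lemma eval_reduce_monom {m q} :
  reduce_monom rules parity m = Some q -> eval_poly q = eval_monom m.
Proof.
rewrite /reduce_monom; case: ifP => [hh [<-]|_]; first by rewrite eval_monom_h_twice.
case: ifP => [/andP[_ m0] [<-]|_].
  by rewrite index_mem in m0; rewrite /= addr0 intr_sign (eval_monom_pull_h m0).
case: m => [|[|i] m] //; last exact: eval_rewrite_pair.
by case E: rewrite_pair => [q'|] //= [<-]; rewrite eval_mul_h (eval_rewrite_pair E).
Qed.

Lemma eval_reduce_step p : eval_poly (reduce_step rules parity p) = eval_poly p.
Proof.
rewrite /reduce_step eval_poly_collect; elim: p => [|t p IH] //=.
rewrite eval_poly_cat IH; case E: reduce_monom => [q|] /=; last by rewrite addr0.
by rewrite eval_poly_scale (eval_reduce_monom E).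
Qed.

Lemma eval_normalize n p : eval_poly (normalize rules parity n p) = eval_poly p.
Proof. by elim: n => [|n IH] //=; rewrite eval_reduce_step. Qed.

Lemma ncexpr_eq_normalize n e1 e2 :
  normalize rules parity n (ncpoly_sub (ncexpr_poly e1) (ncexpr_poly e2)) = [::] ->
  eval_ncexpr env e1 = eval_ncexpr env e2.
Proof.
move=> pq0; rewrite -!eval_ncexpr_poly; apply/eqP.
by rewrite -subr_eq0 -eval_poly_sub -(eval_normalize n) pq0.
Qed.

End NormalizeSound.

Arguments ncexpr_eq_normalize {R env rules parity}.

(* (x, y, f, E) stands for atom x * atom y = (-1)^f * atom y * atom x + E. *)
Definition swap := (nat * nat * bool * ncpoly)%type.

Definition swap_reverse (s : swap) : swap :=
  let: (x, y, f, E) := s in (y, x, f, ncpoly_scale (- (-1) ^+ f) E).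

Definition swap_conjugates (inv : seq (nat * nat)) (s : swap) : seq swap :=
  let: (x, y, f, E) := s in
  [seq (y, p.2, f, ncpoly_mul (ncpoly_monom [:: p.2]) (ncpoly_mul E (ncpoly_monom [:: p.2])))
  | p <- inv & p.1 == x].

Definition with_reverses (ss : seq swap) : seq swap := ss ++ map swap_reverse ss.

Definition conjugates (inv : seq (nat * nat)) (ss : seq swap) : seq swap :=
  flatten (map (swap_conjugates inv) ss).

(* Conjugating a swap of x and y by the inverse x' of x gives a swap of y and x';
   two rounds conjugate both atoms of a swap. *)
Definition swap_closure (inv : seq (nat * nat)) (ss : seq swap) : seq swap :=
  let ss0 := with_reverses ss in
  let ss1 := with_reverses (conjugates inv ss0) in
  ss0 ++ ss1 ++ with_reverses (conjugates inv ss1).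

Definition rule_of_swap (s : swap) : rule :=
  let: (x, y, f, E) := s in (x, y, ((-1) ^+ f, [:: y; x]) :: E).

(* Only descending pairs are rewritten, so normal monomials are increasing. *)
Definition swap_rules (inv : seq (nat * nat)) (ss : seq swap) : seq rule :=
  [seq rule_of_swap s | s <- swap_closure inv ss & let: (x, y, _, _) := s in (y < x)%N].

Definition inverse_rules (inv : seq (nat * nat)) : seq rule :=
  flatten [seq [:: (p.1, p.2, ncpoly_monom [::]); (p.2, p.1, ncpoly_monom [::])] | p <- inv].

Section SwapSound.
Context {R : pzRingType} (env : seq R) (inv : seq (nat * nat)).

Local Notation atom := (atom env).
Local Notation eval_poly := (eval_poly env).

Definition swap_holds (s : swap) : Prop :=
  let: (x, y, f, E) := s in atom x * atom y = (-1) ^+ f * (atom y * atom x) + eval_poly E.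

Hypothesis inverses : {in inv, forall p, atom p.1 * atom p.2 = 1 /\ atom p.2 * atom p.1 = 1}.

Lemma swap_holds_reverse s : swap_holds s -> swap_holds (swap_reverse s).
Proof.
case: s => [[[x y] f] E] /= ->; rewrite eval_poly_scale intrN intr_sign mulrDr mulrA.
by rewrite -expr2 sqrr_sign mul1r mulNr addrK.
Qed.

Lemma swap_holds_conjugates s :
  swap_holds s -> {in swap_conjugates inv s, forall s', swap_holds s'}.
Proof.
case: s => [[[x y] f] E] /= sxy s' /mapP[[x' q]]; rewrite mem_filter /=.
move=> /andP[/eqP-> /inverses[/= xq qx]] ->.
rewrite /= !eval_poly_mul !eval_poly_monom /= !mulr1.
have -> : atom y * atom q = atom q * (atom x * atom y) * atom q by rewrite mulrA qx mul1r.
by rewrite sxy mulrDr mulrDl -!mulrA xq mulr1 mulrA (commr_sign (atom q)) -mulrA.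
Qed.

Lemma swap_holds_closure ss :
  {in ss, forall s, swap_holds s} -> {in swap_closure inv ss, forall s, swap_holds s}.
Proof.
have rev_ok t : {in t, forall s, swap_holds s} -> {in with_reverses t, forall s, swap_holds s}.
  move=> t_ok s; rewrite mem_cat => /orP[/t_ok //|/mapP[s0 /t_ok s0_ok ->]].
  exact: swap_holds_reverse.
have conj_ok t : {in t, forall s, swap_holds s} -> {in conjugates inv t, forall s, swap_holds s}.
  by move=> t_ok s /flatten_mapP[s0 /t_ok /swap_holds_conjugates]; apply.
move=> /rev_ok ss0_ok; have /rev_ok ss1_ok := conj_ok _ ss0_ok.
have ss2_ok := rev_ok _ (conj_ok _ ss1_ok).
move=> s; rewrite /swap_closure mem_cat => /orP[/ss0_ok //|].
by rewrite mem_cat => /orP[/ss1_ok | /ss2_ok].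
Qed.

Lemma rule_of_swap_holds s : swap_holds s -> rule_holds env (rule_of_swap s).
Proof. by case: s => [[[x y] f] E] /= ->; rewrite intr_sign mulr1. Qed.

Lemma swap_rules_hold ss :
  {in ss, forall s, swap_holds s} -> {in swap_rules inv ss, forall r, rule_holds env r}.
Proof.
move=> /swap_holds_closure ss_ok r /mapP[s]; rewrite mem_filter => /andP[_ /ss_ok s_ok] ->.
exact: rule_of_swap_holds.
Qed.

Lemma inverse_rules_hold : {in inverse_rules inv, forall r, rule_holds env r}.
Proof.
move=> r /flatten_mapP[p /inverses[pq qp]]; rewrite !inE.
by case/orP=> /eqP-> /=; rewrite addr0 mulr1.
Qed.

End SwapSound.

Arguments swap_rules_hold {R env inv}.
Arguments inverse_rules_hold {R env inv}.

Ltac atom_index t atoms n :=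
  lazymatch atoms with
  | t :: _ => constr:(Some n)
  | _ :: ?l => atom_index t l (S n)
  | _ => constr:(@None nat)
  end.

Ltac reify_ncexpr atoms t :=
  lazymatch t with
  | ?u + ?v =>
      let eu := reify_ncexpr atoms u in let ev := reify_ncexpr atoms v in constr:(NCAdd eu ev)
  | ?u * ?v =>
      let eu := reify_ncexpr atoms u in let ev := reify_ncexpr atoms v in constr:(NCMul eu ev)
  | - ?u => let eu := reify_ncexpr atoms u in constr:(NCOpp eu)
  | 0 => constr:(NCConst 0)
  | 1 => constr:(NCConst 1)
  | ?n%:R => constr:(NCConst (Posz n))
  | ?z%:~R => constr:(NCConst z)
  | _ =>
      lazymatch atom_index t atoms 0%N with
      | Some ?i => constr:(NCAtom i)
      | None =>
          let t' := eval red in t in reify_ncexpr atoms t'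
      end
  end.

Ltac reify_eq atoms :=
  lazymatch goal with |- ?x = ?y =>
    let ex := reify_ncexpr atoms x in let ey := reify_ncexpr atoms y in
    change (eval_ncexpr atoms ex = eval_ncexpr atoms ey)
  end.

Ltac nc_ring atoms := reify_eq atoms; apply: ncexpr_eq_collect; vm_compute; reflexivity.

Ltac nc_normalize atoms rules_ok h_nil h_comm :=
  reify_eq atoms; apply: (ncexpr_eq_normalize rules_ok h_nil h_comm 300);
  vm_compute; reflexivity.

Section GammaData.
Local Close Scope ring_scope.

(* Atom indices refer to gamma_atoms_Dinv below: 0 h, 1 c, 2 c^-1, 3 b, 4 delta,
   5 alpha, 6 gamma, 7 beta, 8 d, 9 d^-1, 10 a, 11 a^-1, 12 D_h^-1. *)

Definition gamma_parity : pred nat := fun i => i \in [:: 4; 5; 6; 7].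

Definition gamma_inverses : seq (nat * nat) := [:: (10, 11); (8, 9); (1, 2)].

Definition gamma_squares : seq rule :=
  [:: (7, 7, [::]);
      (6, 6, [:: (1%Z, [:: 0; 6; 8]); (1%Z, [:: 0; 6; 8; 7; 9; 6; 9]);
                 ((-1)%Z, [:: 0; 6; 8; 10; 9])]);
      (5, 5, [:: (1%Z, [:: 0; 5; 3])]);
      (4, 4, [:: ((-1)%Z, [:: 0; 4; 3])])].

Definition gamma_swaps (a_ga : ncpoly) : seq swap :=
  [:: (10, 7, false, [::]);
      (10, 6, false, a_ga);
      (8, 7, false, [::]);
      (8, 6, false, [:: ((-1)%Z, [:: 0; 8; 8]); ((-1)%Z, [:: 0; 8; 8; 7; 9; 6; 9]);
                        (1%Z, [:: 0; 8; 8; 10; 9])]);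
      (7, 6, true, [:: (1%Z, [:: 0; 7; 8]); (1%Z, [:: 0; 7; 8; 7; 9; 6; 9]);
                       ((-1)%Z, [:: 0; 7; 8; 10; 9])]);
      (10, 8, false, [:: ((-1)%Z, [:: 0; 7; 8]); ((-1)%Z, [:: 0; 7; 8; 7; 9; 6; 9]);
                         (1%Z, [:: 0; 7; 8; 10; 9])]);
      (10, 5, false, [:: ((-1)%Z, [:: 0; 3; 10]); (1%Z, [:: 0; 5; 7])]);
      (10, 3, false, [:: ((-1)%Z, [:: 0; 3; 7])]);
      (10, 1, false, [:: ((-1)%Z, [:: 0; 1; 7]); (1%Z, [:: 0; 4; 10]); (1%Z, [:: 0; 5; 10])]);
      (10, 4, false, [:: (1%Z, [:: 0; 3; 10]); (1%Z, [:: 0; 4; 7])]);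
      (7, 5, true, [:: (1%Z, [:: 0; 3; 7])]);
      (7, 3, false, [::]);
      (7, 1, false, [:: (1%Z, [:: 0; 4; 7]); (1%Z, [:: 0; 5; 7])]);
      (7, 4, true, [:: ((-1)%Z, [:: 0; 3; 7])]);
      (6, 5, true, [:: (1%Z, [:: 0; 3; 6]); (1%Z, [:: 0; 5; 8]); (1%Z, [:: 0; 5; 10])]);
      (6, 3, false, [:: (1%Z, [:: 0; 3; 8]); (1%Z, [:: 0; 3; 10])]);
      (6, 1, false, [:: (1%Z, [:: 0; 1; 8]); (1%Z, [:: 0; 1; 10]);
                        (1%Z, [:: 0; 4; 6]); (1%Z, [:: 0; 5; 6])]);
      (6, 4, true, [:: ((-1)%Z, [:: 0; 3; 6]); (1%Z, [:: 0; 4; 8]); (1%Z, [:: 0; 4; 10])]);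
      (8, 5, false, [:: ((-1)%Z, [:: 0; 3; 8]); ((-1)%Z, [:: 0; 5; 7])]);
      (8, 3, false, [:: (1%Z, [:: 0; 3; 7])]);
      (8, 1, false, [:: (1%Z, [:: 0; 1; 7]); (1%Z, [:: 0; 4; 8]); (1%Z, [:: 0; 5; 8])]);
      (8, 4, false, [:: (1%Z, [:: 0; 3; 8]); ((-1)%Z, [:: 0; 4; 7])]);
      (5, 3, false, [:: (1%Z, [:: 0; 3; 3])]);
      (5, 1, false, [:: (1%Z, [:: 0; 1; 3]); (1%Z, [:: 0; 4; 5])]);
      (4, 3, false, [:: ((-1)%Z, [:: 0; 3; 3])]);
      (4, 1, false, [:: ((-1)%Z, [:: 0; 1; 3]); (1%Z, [:: 0; 5; 4])]);
      (5, 4, true, [:: (1%Z, [:: 0; 4; 3]); ((-1)%Z, [:: 0; 5; 3])]);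
      (3, 1, false, [:: (1%Z, [:: 0; 4; 3]); (1%Z, [:: 0; 5; 3])])].

Definition gamma_rules (a_ga : ncpoly) : seq rule :=
  inverse_rules gamma_inverses ++ gamma_squares ++ swap_rules gamma_inverses (gamma_swaps a_ga).

(* Two forms of h a^2 (1 - D_h^-1), the correction term of a gamma = gamma a + ...:
   with D_h^-1 as atom 12, and with D_h^-1 replaced by d a^-1 + beta gamma a^-2. *)
Definition a_ga_rest_Dinv : ncpoly := [:: (1%Z, [:: 0; 10; 10]); ((-1)%Z, [:: 0; 10; 10; 12])].

Definition a_ga_rest : ncpoly :=
  [:: (1%Z, [:: 0; 10; 10]); ((-1)%Z, [:: 0; 10; 10; 7; 6; 11; 11]);
      ((-1)%Z, [:: 0; 10; 10; 8; 11])].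

End GammaData.

Section Gamma.
Variables (K : fieldType) (R : unitAlgType K) (h a d be ga al de b c : R).
Hypothesis rels : Gamma_rels h a d be ga al de b c.

Local Notation D := (Dh a d be ga).
Local Notation D' := (d * a^-1 + be * ga * a^-1 * a^-1).

Definition gamma_atoms : seq R := [:: h; c; c^-1; b; de; al; ga; be; d; d^-1; a; a^-1].
(* D^-1 can be an atom only once h is known to commute with D. *)
Definition gamma_atoms_Dinv : seq R := [:: h; c; c^-1; b; de; al; ga; be; d; d^-1; a; a^-1; D^-1].

Local Ltac decompose_rels :=
  have := rels; rewrite /Gamma_rels => ?;
  repeat match goal with H : _ /\ _ |- _ => destruct H end.

Lemma h_supercomm_gamma_atoms i :
  atom gamma_atoms i * h = (-1) ^+ gamma_parity i * (h * atom gamma_atoms i).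
Proof.
decompose_rels.
have hai : h * a^-1 = a^-1 * h by apply: commrV.
have hdi : h * d^-1 = d^-1 * h by apply: commrV.
have hci : h * c^-1 = c^-1 * h by apply: commrV.
do 12?case: i => [|i]; rewrite /atom /gamma_parity /= ?expr0 ?expr1 ?mul1r ?mulN1r //;
  last by rewrite nth_nil mul0r mulr0.
all: match goal with H : h * ?x = _ |- ?x * h = _ => by rewrite [in RHS]H opprK end.
Qed.

Lemma h_nilpotent : h * h = 0.
Proof. by decompose_rels. Qed.

Local Ltac gamma_list atoms := eval unfold atoms in atoms.

Lemma h_comm_Dh : h * D = D * h.
Proof.
have no_rules : {in [::], forall r, rule_holds gamma_atoms r} by [].
let l := gamma_list gamma_atoms in nc_normalize l no_rules h_nilpotent h_supercomm_gamma_atoms.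
Qed.

Lemma h_supercomm_gamma_atoms_Dinv i :
  atom gamma_atoms_Dinv i * h = (-1) ^+ gamma_parity i * (h * atom gamma_atoms_Dinv i).
Proof.
rewrite /atom -[gamma_atoms_Dinv]/(rcons gamma_atoms D^-1) !nth_rcons /=.
case: ltngtP => [i_lt|i_gt|->]; first exact: h_supercomm_gamma_atoms.
  by rewrite mul0r !mulr0.
by rewrite /gamma_parity /= expr0 mul1r; apply/esym/commrV/h_comm_Dh.
Qed.

Lemma gamma_inverses_hold :
  {in gamma_inverses, forall p, atom gamma_atoms_Dinv p.1 * atom gamma_atoms_Dinv p.2 = 1 /\
                                atom gamma_atoms_Dinv p.2 * atom gamma_atoms_Dinv p.1 = 1}.
Proof.
decompose_rels.
by move=> p; rewrite !inE => /or3P[]/eqP-> ; rewrite /atom /= mulrV ?mulVr.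
Qed.

Local Ltac by_relation :=
  let l := gamma_list gamma_atoms_Dinv in
  rewrite /swap_holds /rule_holds /atom /= ?expr0 ?expr1 ?mul1r ?mulN1r;
  match goal with H : ?x = _ |- ?x = _ => rewrite [LHS]H; nc_ring l end.

Lemma gamma_rules_hold {a_ga} :
  swap_holds gamma_atoms_Dinv (10, 6, false, a_ga)%N ->
  {in gamma_rules a_ga, forall r, rule_holds gamma_atoms_Dinv r}.
Proof.
move=> a_ga_holds r; rewrite mem_cat => /orP[|].
  exact: (inverse_rules_hold gamma_inverses_hold r).
decompose_rels; rewrite mem_cat => /orP[|].
  by rewrite !inE; repeat case/orP; move/eqP->; by_relation.
apply: (swap_rules_hold gamma_inverses_hold (gamma_swaps a_ga) _ r) => s.
by rewrite !inE; repeat case/orP; move/eqP->; first [exact: a_ga_holds | by_relation].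
Qed.

Lemma h_mul_Dinv : h * D^-1 = h * D'.
Proof.
have a_ga_holds : swap_holds gamma_atoms_Dinv (10, 6, false, a_ga_rest_Dinv)%N.
  by decompose_rels; by_relation.
have hD'D : h * D' * D = h.
  let l := gamma_list gamma_atoms_Dinv in
  nc_normalize l (gamma_rules_hold a_ga_holds) h_nilpotent h_supercomm_gamma_atoms_Dinv.
have uD : D \is a GRing.unit by decompose_rels.
by rewrite -[in LHS]hD'D -mulrA mulrV // mulr1.
Qed.

Lemma a_ga_swap : a * ga = ga * a + h * (a * a) * (1 - D').
Proof.
have [[_ [ha _]] [_ [[_ [a_ga _]] _]]] := rels.
have haa : h * (a * a) = a * a * h by rewrite mulrA ha -mulrA ha mulrA.
by rewrite a_ga !mulrBr !mulr1 haa -!mulrA h_mul_Dinv !mulrA -haa.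
Qed.

Lemma gamma_normal_rules_hold :
  {in gamma_rules a_ga_rest, forall r, rule_holds gamma_atoms_Dinv r}.
Proof. by apply: gamma_rules_hold; have a_ga := a_ga_swap; by_relation. Qed.

Local Ltac gamma_normalize :=
  let l := gamma_list gamma_atoms_Dinv in
  nc_normalize l gamma_normal_rules_hold h_nilpotent h_supercomm_gamma_atoms_Dinv.

Local Notation W1 := (w1 a d be ga al de b c).
Local Notation U := (uu a d be ga al de b c).
Local Notation W2 := (w2 a d be ga al de b c).
Local Notation V := (vv a d be ga al de b c).
Local Notation Dt := (Dhat al de b c).

Lemma Omega_relations :
  W1 * U = U * W1 - 2%:R * h * (U * U) /\
  W2 * U = U * W2 /\
  W1 * V = V * W1 + 2%:R * h * (W1 * W2 - U * V) /\
  W2 * V = V * W2 /\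
  W1 * W2 = - (W2 * W1) - 2%:R * h * U * W2 /\
  W1 * W1 = - (2%:R * h * U * W1) /\
  W2 * W2 = 0 /\
  U * V = V * U - 2%:R * h * U * W2.
Proof. by repeat split; gamma_normalize. Qed.

Lemma Dh_central : D * W1 = W1 * D /\ D * W2 = W2 * D /\ D * U = U * D /\ D * V = V * D.
Proof. by repeat split; gamma_normalize. Qed.

Lemma Dhat_central :
  Dt * W1 = W1 * Dt /\ Dt * W2 = W2 * Dt /\ Dt * U = U * Dt /\ Dt * V = V * Dt.
Proof. by repeat split; gamma_normalize. Qed.

End Gamma.

Theorem mainTheorem9 (K : fieldType) (R : unitAlgType K)
  (h a d be ga al de b c : R) :
  Gamma_rels h a d be ga al de b c ->
  let W1 := w1 a d be ga al de b c in
  let U := uu a d be ga al de b c in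
  let W2 := w2 a d be ga al de b c in
  let V := vv a d be ga al de b c in
  let D := Dh a d be ga in
  let Dt := Dhat al de b c in
  ( W1 * U = U * W1 - 2%:R * h * (U * U) /\
      W2 * U = U * W2 /\
      W1 * V = V * W1 + 2%:R * h * (W1 * W2 - U * V) /\
      W2 * V = V * W2 /\
      W1 * W2 = - (W2 * W1) - 2%:R * h * U * W2 /\
      W1 * W1 = - (2%:R * h * U * W1) /\
      W2 * W2 = 0 /\
      U * V = V * U - 2%:R * h * U * W2)
  /\ ( ( D * W1 = W1 * D /\ D * W2 = W2 * D /\ D * U = U * D /\ D * V = V * D) /\
         ( Dt * W1 = W1 * Dt /\ Dt * W2 = W2 * Dt /\ Dt * U = U * Dt /\ Dt * V = V * Dt)).
Proof.
move=> rels W1 U W2 V D Dt.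
split; first exact: Omega_relations rels.
by split; [exact: Dh_central rels | exact: Dhat_central rels].
Qed.
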